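(* Let $p,q$ be relatively prime non-zero integers with $q>0$ and $|p|>1$. (i) For $i\in\{1,\dots,|p|-1\}$ and $s\in\mathbb Z$, $$\varphi_i(s)-\varphi_{i-1}(s)=\begin{cases}1 & \text{if } i\equiv sq\pmod p,\\ -1 & \text{if } i\equiv (s+1)q\pmod p,\\ 0&\text{otherwise,}\end{cases}$$ and the two congruences $i\equiv sq$ and $i\equiv (s+1)q\pmod p$ are mutually exclusive. (ii) Let $g$ be a positive integer with $|p|\ge 2g+1$ and $\mu$ an integer with $0<\mu\le g$. Then for every $i\in\{1,\dots,|p|-1\}$, $$\sum_{|s|<\mu}\varphi_i(s)-\sum_{|s|<\mu}\varphi_{i-1}(s)=\begin{cases}1&\text{if } i\equiv(-\mu+1)q\pmod p,\\ -1 &\text{if } i\equiv \mu q\pmod p,\\ 0&\text{otherwise.}\end{cases}$$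
   Context: For relatively prime non-zero integers $p,q$ and $i\in\mathbb Z$, $\varphi_i(s)$ denotes the cardinality of the set $\{n\in\mathbb Z:\lfloor\frac{i+pn}{q}\rfloor=s\}$. *)

From HB Require Import structures.
From mathcomp Require Import all_boot all_order all_algebra.
From mathcomp Require Import finmap boolp classical_sets cardinality.
Set Implicit Arguments. Unset Strict Implicit. Unset Printing Implicit Defensive.
Import Order.TTheory GRing.Theory Num.Theory.
Local Open Scope ring_scope.
Local Open Scope classical_set_scope.

Definition phi_set (p q i s : int) : set int :=
  [set n : int | Num.floor (((i + p * n)%:~R : rat) / (q%:~R : rat)) = s].

(* phi_i(s) = cardinality of phi_set; the set is finite whenever q <> 0,
   and fset_set turns a finite classical set into a finite set. *)
Definition phi (p q i s : int) : nat := #|` fset_set (phi_set p q i s) |.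

From HB Require Import structures.
From mathcomp Require Import all_boot all_order all_algebra.
From mathcomp Require Import finmap boolp classical_sets cardinality zify ring.
Import Order.TTheory GRing.Theory Num.Theory.
Local Open Scope ring_scope.
Local Open Scope classical_set_scope.

(* For q > 0, phi_i(s) counts the n with s q <= i + p n < (s + 1) q, and
   phi_(i-1)(s) those with s q < i + p n <= (s + 1) q.  Both contain the n with
   i + p n strictly inside the interval, and differ only at the endpoints:
   s q is hit iff p | s q - i, and (s + 1) q is hit iff p | (s + 1) q - i.
   Two endpoints c q and d q with 0 < c - d < |p| cannot both be hit, since p
   would divide (c - d) q with p and q coprime.  Summing over s, the
   differences telescope to the two outermost endpoints. *)

Lemma finite_set_normz_le (M : nat) : finite_set [set n : int | `|n| <= M%:Z].
Proof.
apply: (@sub_finite_set _ _ ((fun k : nat => k%:Z - M%:Z) @` `I_(M + M).+1)).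
  by move=> n /= hn; exists (absz (n + M%:Z)); rewrite /=; lia.
exact: finite_image.
Qed.

Definition strip (p i a b : int) : set int := [set n : int | a < i + p * n < b].

Lemma finite_strip (p i a b : int) : p != 0 -> finite_set (strip p i a b).
Proof.
move=> hp; apply: (sub_finite_set _ (finite_set_normz_le (absz i + absz a + absz b))).
move=> n /= /andP[h1 h2].
have hpn : `|n| <= `|p * n| by rewrite normrM; nia.
lia.
Qed.

Lemma card_strip_setU (p i a b c : int) : p != 0 -> ~ (a < c < b) ->
  #|` fset_set (strip p i a b `|` [set n | i + p * n = c])| =
    addn (p %| c - i)%Z #|` fset_set (strip p i a b)|.
Proof.
move=> hp hc; have fin_strip := finite_strip p i a b hp.
have [dvd_p|ndvd_p] := boolP (p %| c - i)%Z.
- set n0 := ((c - i) %/ p)%Z.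
  have e : i + p * n0 = c by rewrite mulrC divzK //; lia.
  have -> : strip p i a b `|` [set n | i + p * n = c] = n0 |` strip p i a b.
    apply/seteqP; split => n /=.
      case=> [hb|hn]; [by right|left].
      by apply: (mulfI hp); apply: (addrI i); rewrite hn e.
    by case=> [->|hb]; [right|left].
  rewrite fset_setU1 // cardfsU1 in_fset_set //.
  suff -> : (n0 \in strip p i a b) = false by [].
  by apply/negbTE/negP; rewrite in_setE /strip /= e.
- suff -> : strip p i a b `|` [set n | i + p * n = c] = strip p i a b by [].
  apply/seteqP; split => n /=; last by left.
  case=> // hn; case/negP: ndvd_p; apply/dvdzP; exists n.
  by rewrite -hn mulrC; ring.
Qed.

Lemma floor_divz_eqP (a q s : int) : 0 < q ->
  Num.floor ((a%:~R : rat) / q%:~R) = s <-> s * q <= a < (s + 1) * q.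
Proof.
move=> hq; have hq' : (0 : rat) < q%:~R by rewrite ltr0z.
have le_div m : (m%:~R <= (a%:~R : rat) / q%:~R) = (m * q <= a).
  by rewrite ler_pdivlMr // -intrM ler_int.
have div_lt m : ((a%:~R : rat) / q%:~R < m%:~R) = (a < m * q).
  by rewrite ltr_pdivrMr // -intrM ltr_int.
split.
  by move=> <-; have /andP[h1 h2] := floor_itv ((a%:~R : rat) / q%:~R);
    rewrite -le_div -div_lt h1 h2.
by move=> /andP[h1 h2]; apply: floor_def; rewrite le_div div_lt h1 h2.
Qed.

Lemma phi_strip (p q i s : int) : p != 0 -> 0 < q ->
  phi p q i s = addn (p %| s * q - i)%Z #|` fset_set (strip p i (s * q) ((s + 1) * q))|.
Proof.
move=> hp hq; rewrite /phi -card_strip_setU //; last by lia.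
congr (#|` fset_set _|); apply/seteqP; split => n /=; rewrite /phi_set /= floor_divz_eqP //.
  move=> /andP[h1 h2].
  have [->|hne] := eqVneq (s * q) (i + p * n); first by right.
  by left; apply/andP; split => //; rewrite lt_neqAle hne h1.
by case=> [/andP[h1 h2]|hn]; apply/andP; split; lia.
Qed.

Lemma phi_pred_strip (p q i s : int) : p != 0 -> 0 < q ->
  phi p q (i - 1) s =
    addn (p %| (s + 1) * q - i)%Z #|` fset_set (strip p i (s * q) ((s + 1) * q))|.
Proof.
move=> hp hq; rewrite /phi -card_strip_setU //; last by lia.
congr (#|` fset_set _|); apply/seteqP; split => n /=; rewrite /phi_set /= floor_divz_eqP //.
  move=> /andP[h1 h2].
  have [->|/eqP hne] := eqVneq (i + p * n) ((s + 1) * q); first by right.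
  by left; apply/andP; split; lia.
by case=> [/andP[h1 h2]|hn]; apply/andP; split; lia.
Qed.

Lemma phi_sub_pred (p q i s : int) : p != 0 -> 0 < q ->
  (phi p q i s)%:Z - (phi p q (i - 1) s)%:Z =
    (p %| s * q - i)%Z%:Z - (p %| (s + 1) * q - i)%Z%:Z.
Proof. by move=> hp hq; rewrite phi_strip // phi_pred_strip // !PoszD; ring. Qed.

Lemma sum_phi_sub_pred (p q i m : int) (N : nat) : p != 0 -> 0 < q ->
  \sum_(k < N) ((phi p q i (k%:Z + m))%:Z - (phi p q (i - 1) (k%:Z + m))%:Z) =
    (p %| m * q - i)%Z%:Z - (p %| (N%:Z + m) * q - i)%Z%:Z.
Proof.
move=> hp hq; rewrite -(big_mkord xpredT
  (fun k : nat => (phi p q i (k%:Z + m))%:Z - (phi p q (i - 1) (k%:Z + m))%:Z)).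
rewrite (@telescope_sumr_eq _ 0 N (fun k : nat => - (p %| (k%:Z + m) * q - i)%Z%:Z)) //.
  by rewrite add0r; ring.
move=> k _; rewrite phi_sub_pred // -addn1 PoszD addrAC opprK addrC; ring.
Qed.

Lemma eqz_mod_dvd_sub (p i c : int) : (i == c %[mod p])%Z = (p %| c - i)%Z.
Proof. by rewrite eqz_mod_dvd -rpredN opprB. Qed.

Lemma coprimez_dvd_sub_excl (p q i c d : int) : coprimez p q -> 0 < c - d < `|p| ->
  ~ ((p %| c * q - i)%Z /\ (p %| d * q - i)%Z).
Proof.
move=> pq_coprime hcd [hc hd].
have : (p %| (c - d) * q)%Z.
  by rewrite (_ : (c - d) * q = (c * q - i) - (d * q - i)); [exact: rpredB | ring].
rewrite Gauss_dvdzl // dvdzE => /dvdn_leq; lia.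
Qed.

Lemma if_excl_subE (b1 b2 : bool) : ~ (b1 /\ b2) ->
  (if b1 then 1 else if b2 then -1 else 0) = b1%:Z - b2%:Z :> int.
Proof. by case: b1; case: b2 => // /(_ (conj isT isT)). Qed.

Theorem lemma3p2 (p q : int) (hcop : coprimez p q) (hp0 : p != 0) (hq0 : q != 0)
  (hq : 0 < q) (hp : 1 < `|p|) :
  (forall (i s : int), 1 <= i <= `|p| - 1 ->
     ((phi p q i s)%:Z - (phi p q (i - 1) s)%:Z =
        (if (i == s * q %[mod p])%Z then 1
         else if (i == (s + 1) * q %[mod p])%Z then -1 else 0))
     /\ ~ ((i == s * q %[mod p])%Z /\ (i == (s + 1) * q %[mod p])%Z))
  /\
  (forall (g mu : int), 0 < g -> 2 * g + 1 <= `|p| -> 0 < mu <= g ->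
     forall i : int, 1 <= i <= `|p| - 1 ->
       (\sum_(k < absz (2 * mu - 1)%R) (phi p q i (k%:Z - mu + 1))%:Z)
       - (\sum_(k < absz (2 * mu - 1)%R) (phi p q (i - 1) (k%:Z - mu + 1))%:Z)
       = (if (i == (- mu + 1) * q %[mod p])%Z then 1
          else if (i == mu * q %[mod p])%Z then -1 else 0)).
Proof.
split=> [i s _ | g mu hg hgp hmu i _]; rewrite !eqz_mod_dvd_sub.
  have excl : ~ ((p %| s * q - i)%Z /\ (p %| (s + 1) * q - i)%Z).
    by case=> h1 h2; apply: (coprimez_dvd_sub_excl p q i (s + 1) s hcop); [lia|].
  by rewrite if_excl_subE // phi_sub_pred.
have excl : ~ ((p %| (- mu + 1) * q - i)%Z /\ (p %| mu * q - i)%Z).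
  by case=> h1 h2; apply: (coprimez_dvd_sub_excl p q i mu (- mu + 1) hcop); [lia|].
rewrite if_excl_subE // -sumrB.
under eq_bigr do rewrite -addrA.
rewrite sum_phi_sub_pred // (_ : (absz (2 * mu - 1)%R)%:Z + (- mu + 1) = mu) //; lia.
Qed.
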